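(* Let $G$ and $H$ be finite abelian groups, written additively, of the same even order $k$, and let $f:G\to H$ be semi-planar. If $S(G,H;f)$ splits into two substructures, then each of the two substructures is divisible.
   Context: A function $f:G\to H$ is semi-planar if for every non-identity $a\in G$ and every $y\in H$, the equation $f(x+a)-f(x)=y$ has either $0$ or $2$ solutions $x\in G$. The incidence structure $S(G,H;f)$ has points $(x,y)\in G\times H$ and lines $\mathcal{L}(a,b)$ for $(a,b)\in G\times H$, with $(x,y)$ incident with $\mathcal{L}(a,b)$ iff $y=f(x-a)+b$. Its incidence graph is the bipartite graph on points and lines with an edge for each incident point-line pair. $S(G,H;f)$ splits into two substructures if its incidence graph has exactly two connected components; the substructures are the incidence structures formed by the points and lines of each component (each consists of $k^2/2$ points and $k^2/2$ lines). An incidence structure is divisible if its points can be partitioned into classes such that two distinct points from the same class lie on no common line and two points from different classes lie on exactly two common lines. *)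

From HB Require Import structures.
From mathcomp Require Import all_boot all_algebra.
Set Implicit Arguments. Unset Strict Implicit. Unset Printing Implicit Defensive.
Import GRing.Theory.
Local Open Scope ring_scope.

Section SemiPlanar.
Variables (G H : finZmodType).

Definition semi_planar (f : G -> H) : Prop :=
  forall (a : G) (y : H), a != 0 ->
    let c := #|[set x : G | f (x + a) - f x == y]| in ((c == 0) || (c == 2))%N.

(* Points and lines of S(G,H;f) are both indexed by G * H;
   point (x,y) is incident with line L(a,b) iff y = f(x - a) + b. *)
Definition incid (f : G -> H) (p l : G * H) : bool :=
  p.2 == f (p.1 - l.1) + l.2.

(* Vertices of the incidence graph: inl p = point p, inr l = line l. *)
Definition ivert := ((G * H) + (G * H))%type.

Definition iedge (f : G -> H) : rel ivert :=
  fun u v => match u, v with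
             | inl p, inr l => incid f p l
             | inr l, inl p => incid f p l
             | _, _ => false
             end.

Definition icomp (f : G -> H) (v : ivert) : {set ivert} :=
  [set w | connect (iedge f) v w].

Definition icomps (f : G -> H) : {set {set ivert}} :=
  [set icomp f v | v : ivert].

Definition splits_in_two (f : G -> H) : Prop := #|icomps f| = 2%N.

Definition sub_points (C : {set ivert}) : {set G * H} := [set p | inl p \in C].
Definition sub_lines (C : {set ivert}) : {set G * H} := [set l | inr l \in C].

Definition common_lines (f : G -> H) (C : {set ivert}) (p q : G * H) :=
  [set l in sub_lines C | incid f p l && incid f q l].

Definition divisible_sub (f : G -> H) (C : {set ivert}) : Prop :=
  exists P : {set {set G * H}},
    partition P (sub_points C) /\
    forall p q, p \in sub_points C -> q \in sub_points C -> p != q ->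
      (pblock P p == pblock P q -> #|common_lines f C p q| = 0%N) /\
      (pblock P p != pblock P q -> #|common_lines f C p q| = 2%N).

End SemiPlanar.

From mathcomp Require Import all_boot all_algebra.
Set Implicit Arguments. Unset Strict Implicit. Unset Printing Implicit Defensive.
Import GRing.Theory.
Local Open Scope ring_scope.

(* Translations of G x H are automorphisms of S(G,H;f), so the point set P of
   a component is a coset: r - b + a lies in P whenever a, b, r do.  If P is
   not everything, some vertical translate of P is disjoint from P, hence
   every column of P has at most |H|/2 points.  For p in P and d != 0, the
   lines through p meet the column over p.1 + d in the points
   p + (d, f (x + d) - f x), of which there are at least |G|/2 = |H|/2 by
   semi-planarity; so they fill that column.  Thus any two points of P in
   different columns have a common line, hence exactly two, while two points
   in the same column have none: the columns partition P into the classes. *)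

Lemma eq_pblock_preim_partition (T : finType) (rT : eqType) (g : T -> rT)
    (D : {set T}) :
  {in D &, forall x y,
    (pblock (preim_partition g D) x == pblock (preim_partition g D) y)
    = (g x == g y)}.
Proof.
move=> x y Dx Dy; have /and3P[/eqP covP triv _] := preim_partitionP g D.
rewrite eq_pblock ?covP // /preim_partition pblock_equivalence_partition //.
by move=> a b c _ _ _; split=> // /eqP ->.
Qed.

Section Incidence.
Variables (G H : finZmodType) (f : G -> H).

Definition fdiff (a x : G) : H := f (x + a) - f x.

Definition column (P : {set G * H}) (x : G) : {set G * H} :=
  [set r in P | r.1 == x].

Lemma prodB (s c : G * H) : s - c = (s.1 - c.1, s.2 - c.2).
Proof. by []. Qed.

Lemma iedge_sym : symmetric (iedge f).
Proof. by move=> [u|u] [v|v]. Qed.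

Lemma incidB (s l c : G * H) : incid f (s - c) (l - c) = incid f s l.
Proof.
rewrite /incid /= opprB [s.1 - c.1 + _]addrA subrK addrA.
exact: (inj_eq (addIr (- c.2))).
Qed.

Lemma card_common_incid (p q : G * H) :
  #|[set l | incid f p l && incid f q l]| =
  #|[set x | fdiff (q.1 - p.1) x == q.2 - p.2]|.
Proof.
pose line_through_p x := (p.1 - x, p.2 - f x).
have inj_line : injective line_through_p by move=> x y [/subrI].
rewrite -(card_imset _ inj_line); apply: eq_card => l; rewrite inE.
apply/idP/imsetP => [/andP[/eqP Ep /eqP Eq]|[x]].
  exists (p.1 - l.1).
    rewrite inE /fdiff [p.1 - l.1 + _]addrC subrKA Ep Eq opprD addrACA.
    by rewrite subrr addr0.
  rewrite /line_through_p subKr Ep [f _ + l.2]addrC addrK.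
  by rewrite -surjective_pairing.
rewrite inE /fdiff => /eqP Ex ->; rewrite /incid /line_through_p /=.
rewrite subKr addrC addrNK eqxx /= opprB [q.1 + _]addrCA.
by rewrite [f _ + _]addrCA Ex addrC subrK.
Qed.

Lemma common_incid_same_x (p q : G * H) :
  p.1 = q.1 -> p != q -> [set l | incid f p l && incid f q l] = set0.
Proof.
move=> E1 pq; apply/setP => l; rewrite !inE /incid E1.
apply/negbTE/andP => -[/eqP Ep /eqP Eq]; case/eqP: pq.
by rewrite [p]surjective_pairing [q]surjective_pairing E1 Ep Eq.
Qed.

Lemma semi_planar_card_fdiff_image (a : G) : semi_planar f -> a != 0 ->
  (#|G| <= 2 * #|[set fdiff a x | x : G]|)%N.
Proof.
move=> sp a0; set Im := [set fdiff a x | x : G].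
have fibre_le y : (#|[set x | fdiff a x == y]| <= 2 * (y \in Im))%N.
  have [Im_y|notIm_y] := boolP (y \in Im).
    by have := sp a y a0; rewrite /= => /orP[] /eqP ->.
  rewrite muln0 leqn0 cards_eq0; apply/eqP/setP => x; rewrite !inE.
  by apply: contraNF notIm_y => /eqP <-; apply: imset_f.
rewrite -(sum1_card G) (partition_big (fdiff a) predT) //=.
apply: (@leq_trans (\sum_(y : H) 2 * (y \in Im))).
  apply: leq_sum => y _; apply: leq_trans (fibre_le y).
  by rewrite -sum1_card; apply: eq_leq; apply: eq_bigl => x; rewrite inE.
by rewrite -big_distrr -sum1_card [in X in (_ <= X)%N]big_mkcond.
Qed.

Section Component.
Variable v : ivert G H.
Let P := sub_points (icomp f v).

Lemma mem_points p : (p \in P) = connect (iedge f) v (inl p).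
Proof. by rewrite !inE. Qed.

Lemma points_collinear s t l : s \in P -> incid f s l -> incid f t l -> t \in P.
Proof.
rewrite !mem_points => vs sl tl; apply: (connect_trans vs).
by apply: (connect_trans (y := inr l)); apply: connect1; rewrite /= ?tl.
Qed.

Lemma common_lines_icomp p q : p \in P ->
  common_lines f (icomp f v) p q = [set l | incid f p l && incid f q l].
Proof.
move=> Pp; apply/setP => l; rewrite !inE; apply/andb_idl => /andP[pl _].
by move: Pp; rewrite mem_points => /connect_trans; apply; apply: connect1.
Qed.

Lemma points_sub_collinear_closed (X : {set G * H}) q :
  (forall s t l, s \in X -> incid f s l -> incid f t l -> t \in X) ->
  q \in X -> q \in P -> P \subset X.
Proof.
move=> clX Xq Pq; apply/subsetP => r Pr.
pose Y := [pred w : ivert G H | match w with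
  | inl s => s \in X
  | inr l => [exists s, (s \in X) && incid f s l] end].
have csym := sym_connect_sym iedge_sym.
have clY : closed (iedge f) Y.
  apply: (intro_closed csym) => -[s|l] [t|m] //= e; rewrite !inE /=.
    by move=> Xs; apply/existsP; exists s; rewrite Xs.
  by case/existsP => s /andP[Xs sl]; apply: clX Xs sl e.
have qr : connect (iedge f) (inl q) (inl r).
  by move: Pq Pr; rewrite !mem_points csym => qv; apply: connect_trans.
by have := closed_connect clY qr; rewrite !inE /= Xq => <-.
Qed.

Lemma points_translate a b r :
  a \in P -> b \in P -> r \in P -> r - (b - a) \in P.
Proof.
move=> Pa Pb Pr; pose X := [set s : G * H | s - (b - a) \in P].
suff /subsetP/(_ r Pr) : P \subset X by rewrite inE.
apply: (points_sub_collinear_closed (q := b)) => //; last by rewrite inE subKr.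
move=> s t l; rewrite !inE -!mem_points => Xs sl tl.
by apply: (points_collinear (l := l - (b - a)) Xs); rewrite incidB.
Qed.

Lemma points_fdiff p d u : p \in P -> (p.1 + d, p.2 + fdiff d u) \in P.
Proof.
move=> Pp; apply: (points_collinear (l := (p.1 - u, p.2 - f u)) Pp).
  by rewrite /incid /= subKr addrC addrNK.
by rewrite /incid /= [p.1 + d]addrC -addrA subKr (addrC d u) /fdiff addrCA.
Qed.

Lemma icomps_le1 : P = setT -> (#|icomps f| <= 1)%N.
Proof.
move=> Pall; have csym := sym_connect_sym iedge_sym.
have v_any w : connect (iedge f) v w.
  have mem_all p : connect (iedge f) v (inl p) by rewrite -mem_points Pall inE.
  case: w => [//|l]; apply: (connect_trans (mem_all (l.1, f 0 + l.2))).
  by apply: connect1; rewrite /= /incid /= subrr.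
rewrite -(cards1 (icomp f v)); apply: subset_leq_card.
apply/subsetP => _ /imsetP[w _ ->]; rewrite inE; apply/eqP/setP => x.
by rewrite !inE (same_connect csym (v_any w)).
Qed.

Lemma card_column_half p : P != setT -> p \in P ->
  (2 * #|column P p.1| <= #|H|)%N.
Proof.
move=> Pproper Pp; set Y := column P p.1.
pose up h (r : G * H) := (r.1, r.2 + h).
have [/existsP[h /forallP Yh_out]|] :=
  boolP [exists h, [forall r in Y, up h r \notin P]].
  have inj_up : injective (up h) by move=> [x y] [x' y'] [/= -> /addIr ->].
  have disj : Y :&: up h @: Y = set0.
    apply/setP => z; rewrite in_setI in_set0; apply/negbTE/andP.
    case=> /setIdP[Pz _] /imsetP[r Yr Ez].
    by have := Yh_out r; rewrite Yr -Ez Pz.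
  rewrite mul2n -addnn -{2}(card_imset Y inj_up) -cardsUI disj cards0 addn0.
  have inj_col : injective (pair p.1 : H -> G * H) by move=> y y' [].
  rewrite -(card_imset _ inj_col).
  apply: subset_leq_card; apply/subsetP => z.
  rewrite in_setU => /orP[|/imsetP[r]] /setIdP[_ /eqP E].
    by rewrite [z]surjective_pairing E imset_f.
  by move->; rewrite /up E imset_f.
(* Otherwise every vertical translate of Y meets P, and since P is a coset
   meeting every column, P is everything. *)
rewrite negb_exists => /forallP Yh_in; case/eqP: Pproper.
apply/setP => z; rewrite in_setT.
pose w := (z.1, p.2 + fdiff (z.1 - p.1) p.1).
have Pw : w \in P by have := points_fdiff (z.1 - p.1) p.1 Pp; rewrite subrKC.
have /existsP[r] := Yh_in (z.2 - w.2).
rewrite negb_imply negbK => /andP[/setIdP[Pr _] Prz].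
suff -> : z = w - (r - up (z.2 - w.2) r) by apply: points_translate.
rewrite [z]surjective_pairing /w /up !prodB /= subrr subr0 opprB.
by rewrite [r.2 + _]addrC addrK subrKC.
Qed.

Section SemiPlanar.
Hypotheses (sp : semi_planar f) (cardGH : #|G| = #|H|) (Pproper : P != setT).

Lemma points_column_fdiff p q : p \in P -> q \in P -> q.1 != p.1 ->
  exists u, q.2 = p.2 + fdiff (q.1 - p.1) u.
Proof.
move=> Pp Pq qp1; set d := q.1 - p.1.
have d0 : d != 0 by rewrite subr_eq0.
pose Ad := [set (q.1, p.2 + y) | y in [set fdiff d u | u : G]].
have Ad_sub : Ad \subset column P q.1.
  apply/subsetP => _ /imsetP[_ /imsetP[u _ ->] ->].
  by rewrite inE eqxx andbT -(subrKC p.1 q.1) points_fdiff.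
have card_Ad : #|Ad| = #|[set fdiff d u | u : G]|.
  by apply: card_imset => y y' [/addrI].
have /eqP Ad_col : Ad == column P q.1.
  rewrite eqEcard Ad_sub -(leq_pmul2l (isT : (0 < 2)%N)) card_Ad.
  apply: leq_trans (card_column_half Pproper Pq) _.
  by rewrite -cardGH semi_planar_card_fdiff_image.
have : q \in Ad by rewrite Ad_col inE Pq eqxx.
by case/imsetP => _ /imsetP[u _ ->] ->; exists u.
Qed.

Lemma points_two_common_lines p q : p \in P -> q \in P -> q.1 != p.1 ->
  #|[set l | incid f p l && incid f q l]| = 2%N.
Proof.
move=> Pp Pq qp1; rewrite card_common_incid.
have d0 : q.1 - p.1 != 0 by rewrite subr_eq0.
have /orP[/eqP no_sol|/eqP //] := sp (q.2 - p.2) d0.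
have [u Eu] := points_column_fdiff Pp Pq qp1.
move/eqP: no_sol; rewrite cards_eq0 => /eqP/setP/(_ u).
by rewrite !inE Eu [p.2 + _]addrC addrK eqxx.
Qed.

End SemiPlanar.
End Component.
End Incidence.

Theorem theorem1 (G H : finZmodType) (k : nat) (f : G -> H) :
  #|G| = k -> #|H| = k -> ~~ odd k ->
  semi_planar f ->
  splits_in_two f ->
  forall C, C \in icomps f -> divisible_sub f C.
Proof.
move=> cardG cardH _ sp two C /imsetP[v _ ->].
set P := sub_points (icomp f v).
have Pproper : P != setT.
  by apply/eqP => /icomps_le1; rewrite two.
have cardGH : #|G| = #|H| by rewrite cardG cardH.
exists (preim_partition fst P); split=> [|p q Pp Pq pq].
  exact: preim_partitionP.
rewrite eq_pblock_preim_partition // common_lines_icomp //.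
have [pq1|pq1] := eqVneq p.1 q.1; split=> // _.
  by rewrite common_incid_same_x ?cards0.
rewrite eq_sym in pq1.
exact: (points_two_common_lines sp cardGH Pproper Pp Pq pq1).
Qed.
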